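(* Consider the lattice Boltzmann scheme on $\mathbb{Z}$ described in the context, with bulk operator $\hat{E}(\kappa)$. If the Finite Difference scheme generated by the characteristic polynomial $\det(zI_q-\hat{E}(\kappa))$ is $L^2$ stable (in the sense of the context), then the lattice Boltzmann scheme is $L^2$ stable (in the sense of the context). The converse implication is false in general: there exist lattice Boltzmann schemes of this form which are $L^2$ stable while the associated Finite Difference scheme is not.
   Context: Fix an integer $q\geq 2$, integer velocities $c_1,\dots,c_q\in\mathbb{Z}$, an invertible moment matrix $M\in\mathbb{R}^{q\times q}$, relaxation parameters $s_1\in\mathbb{R}$ and $s_2,\dots,s_q\in(0,2]$, and an equilibrium vector $\epsilon\in\mathbb{R}^q$ with $\epsilon_1=1$. Let $e_i$ denote the canonical basis vectors and set $K:=I_q+\mathrm{diag}(s_1,\dots,s_q)(\epsilon e_1^{\mathsf T}-I_q)$. For $\kappa\in\mathbb{C}\setminus\{0\}$ let $\hat{E}(\kappa):=M\,\mathrm{diag}(\kappa^{-c_1},\dots,\kappa^{-c_q})\,M^{-1}K=\sum_j E_j\kappa^j$, where $E_j:=\sum_{i:\,c_i=-j}Me_ie_i^{\mathsf T}M^{-1}K$. The lattice Boltzmann scheme on $\mathbb{Z}$ acts on moment vectors $m^n_j\in\mathbb{R}^q$ by $m^{n+1}_j=\sum_{k}E_k m^n_{j+k}$, $j\in\mathbb{Z}$, with space step $\Delta x>0$. It is called $L^2$ stable if there is $C>0$ such that for all $\Delta x>0$, all initial data $(m^0_j)_{j\in\mathbb{Z}}\in(\ell^2)^q$ and all $n\in\mathbb{N}$,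 $\sum_{j\in\mathbb{Z}}\Delta x|m^n_j|^2\leq C\sum_{j\in\mathbb{Z}}\Delta x|m^0_j|^2$ (any norm $|\cdot|$ on $\mathbb{R}^q$). Associated Finite Difference scheme: write $\det(zI_q-\hat{E}(\kappa))=z^q+\sum_{\ell=q-1-s}^{q-1}\gamma_\ell(\kappa)z^\ell$, where $s:=\#\{\ell\in\{2,\dots,q\}: s_\ell\neq 1\}$ and the $\gamma_\ell$ are Laurent polynomials in $\kappa$. The scalar scheme is $u^{n+1}_j=-\sum_{\ell=0}^{s}\gamma_{q-\ell-1}(\mathsf T)u^{n-\ell}_j$ for $n\geq s$, $j\in\mathbb{Z}$, where $\mathsf T$ is the forward shift $(\mathsf T u)_j=u_{j+1}$. It is called $L^2$ stable if there is $C>0$ such that for all $\Delta x>0$, all initial data $(u^0_j)_j,\dots,(u^{s-1}_j)_j\in\ell^2$ and all $n\in\mathbb{N}$, $\sum_{j}\Delta x|u^n_j|^2\leq C\sum_{\ell=0}^{s-1}\sum_j\Delta x|u^\ell_j|^2$. *)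

From HB Require Import structures.
From mathcomp Require Import all_boot all_order all_algebra.
From mathcomp Require Import all_classical all_reals all_analysis.
Set Implicit Arguments. Unset Strict Implicit. Unset Printing Implicit Defensive.
Import Order.TTheory GRing.Theory Num.Theory.
Local Open Scope ring_scope.

Section LBM.
Variable R : realType.
Variable q : nat.
Hypothesis hq : (1 < q)%N.

(* the first canonical index (index "1" of the paper) *)
Definition i0 : 'I_q := Ordinal (ltnW hq).

Definition nrm2 (v : 'cV[R]_q) : R := \sum_(i < q) (v i 0) ^+ 2.

Variables (c : 'I_q -> int) (M : 'M[R]_q) (s : 'I_q -> R) (eps : 'I_q -> R).

Definition Kmx : 'M[R]_q :=
  1%:M + diag_mx (\row_i s i) *m ((\col_i eps i) *m (delta_mx i0 0 : 'cV[R]_q)^T - 1%:M).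

Definition Emx (j : int) : 'M[R]_q :=
  \sum_(i < q | c i == - j) (M *m delta_mx i i *m invmx M *m Kmx).

(* N = max |c_i| : E_j = 0 whenever |j| > N *)
Definition Nmax : nat := (\max_(i < q) `|c i|%N)%N.

Definition lbm_step (m : int -> 'cV[R]_q) : int -> 'cV[R]_q :=
  fun j => \sum_(k < (Nmax + Nmax).+1)
              Emx (k%:Z - Nmax%:Z) *m m (j + (k%:Z - Nmax%:Z)).

Definition lbm_iter (n : nat) (m0 : int -> 'cV[R]_q) : int -> 'cV[R]_q :=
  iter n lbm_step m0.

Definition l2_vec (m : int -> 'cV[R]_q) : Prop :=
  (\esum_(j in [set: int]) (nrm2 (m j))%:E < +oo)%E.

Definition lbm_L2_stable : Prop :=
  exists C : R, 0 < C /\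
    forall (dx : R), 0 < dx -> forall m0 : int -> 'cV[R]_q, l2_vec m0 ->
    forall n : nat,
      (\esum_(j in [set: int]) (dx * nrm2 (lbm_iter n m0 j))%:E
        <= C%:E * \esum_(j in [set: int]) (dx * nrm2 (m0 j))%:E)%E.

(* Polynomial matrix P(X) = X^N Ehat(X) = sum_j E_j X^(j+N), entries in {poly R}. *)
Definition Ptil : 'M[{poly R}]_q :=
  \sum_(k < (Nmax + Nmax).+1) ('X^k *: map_mx polyC (Emx (k%:Z - Nmax%:Z))).

(* det(w I - P(X)) = sum_l a_l(X) w^l, and
   det(z I - Ehat(kappa)) = kappa^{-qN} det(kappa^N z I - P(kappa))
                          = sum_l kappa^{-N(q-l)} a_l(kappa) z^l,
   so gamma_l(kappa) = kappa^{-N(q-l)} a_l(kappa)  (a Laurent polynomial). *)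
Definition acoef (l : nat) : {poly R} := (char_poly Ptil)`_l.

Definition gammaT (l : nat) (u : int -> R) : int -> R :=
  fun j => \sum_(i < size (acoef l))
             (acoef l)`_i * u (j + (i%:Z - (Nmax * (q - l))%N%:Z)).

Definition snum : nat := #|[set i : 'I_q | (i != i0) && (s i != 1)]|.

Definition fd_solution (u : nat -> int -> R) : Prop :=
  forall n : nat, (snum <= n)%N -> forall j : int,
    u n.+1 j = - \sum_(l < snum.+1) gammaT (q - l - 1) (u (n - l)%N) j.

Definition l2_sc (u : int -> R) : Prop :=
  (\esum_(j in [set: int]) ((u j) ^+ 2)%:E < +oo)%E.

Definition fd_L2_stable : Prop :=
  exists C : R, 0 < C /\
    forall (dx : R), 0 < dx -> forall u : nat -> int -> R,
    (forall l : nat, (l <= snum)%N -> l2_sc (u l)) ->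
    fd_solution u ->
    forall n : nat,
      (\esum_(j in [set: int]) (dx * (u n j) ^+ 2)%:E
        <= C%:E * \sum_(l < snum.+1) \esum_(j in [set: int]) (dx * (u l j) ^+ 2)%:E)%E.

Definition lbm_hyps : Prop :=
  [/\ M \in unitmx,
      (forall i : 'I_q, i != i0 -> 0 < s i <= 2) &
      eps i0 = 1].

End LBM.

(* Write P(k) = k^N E(k) = G(k) K.  A column b <> 1 of K with s_b = 1 vanishes, so K has
   rank at most s + 1 and X^(q - s - 1) divides the characteristic polynomial of P.
   Cayley-Hamilton for P, with k read as the shift T, then shows that from time q - s - 1
   on every moment of the lattice Boltzmann iterates solves the Finite Difference scheme.
   Its L^2 stability bounds them by their first s + 1 levels, and these, like all levels
   before time q - s - 1, are controlled by the crude growth bound of at most q lattice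
   Boltzmann steps.
   Conversely, for q = 3, no transport, M = I and all s_i = 2, the matrix
   K = diag(1, -1, -1) is an isometry, whereas the characteristic polynomial
   (z - 1) (z + 1)^2 has a double root on the unit circle, and the Finite Difference
   scheme has the solution (-1)^n n delta_0. *)

From HB Require Import structures.
From mathcomp Require Import all_boot all_order all_algebra.
From mathcomp Require Import all_classical all_reals all_analysis.
From mathcomp Require Import ring lra zify.
Set Implicit Arguments. Unset Strict Implicit. Unset Printing Implicit Defensive.
Import Order.TTheory GRing.Theory Num.Theory.
Local Open Scope ring_scope.

Section PolyShift.
Variable R : comNzRingType.

Definition polyT (p : {poly R}) (u : int -> R) : int -> R :=
  fun j => \sum_(i < size p) p`_i * u (j + i%:Z).

Lemma polyT_widen n (p : {poly R}) u j : (size p <= n)%N ->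
  polyT p u j = \sum_(i < n) p`_i * u (j + i%:Z).
Proof.
move=> hn; rewrite /polyT (big_ord_widen n (fun i => p`_i * u (j + i%:Z))) //.
rewrite big_mkcond /=; apply: eq_bigr => i _.
by case: ifP => // /negbT; rewrite -leqNgt => /(nth_default 0) ->; rewrite mul0r.
Qed.

Lemma eq_polyT (p : {poly R}) (u v : int -> R) j : u =1 v -> polyT p u j = polyT p v j.
Proof. by move=> e; apply: eq_bigr => i _; rewrite e. Qed.

Lemma polyT0 (u : int -> R) j : polyT 0 u j = 0.
Proof. by rewrite /polyT size_poly0 big_ord0. Qed.

Lemma polyT1 (u : int -> R) j : polyT 1 u j = u j.
Proof. by rewrite /polyT size_poly1 big_ord1 coefC mul1r addr0. Qed.

Lemma polyTD (p r : {poly R}) u j : polyT (p + r) u j = polyT p u j + polyT r u j.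
Proof.
have hp : (size p <= size p + size r)%N by apply: leq_addr.
have hr : (size r <= size p + size r)%N by apply: leq_addl.
have hpr : (size (p + r)%R <= size p + size r)%N.
  by apply: leq_trans (size_polyD _ _) _; rewrite geq_max hp hr.
rewrite (polyT_widen u j hp) (polyT_widen u j hr) (polyT_widen u j hpr) -big_split.
by apply: eq_bigr => i _; rewrite coefD mulrDl.
Qed.

Lemma polyTZ a (p : {poly R}) u j : polyT (a *: p) u j = a * polyT p u j.
Proof.
rewrite (polyT_widen u j (size_scale_leq a p)) /polyT mulr_sumr.
by apply: eq_bigr => i _; rewrite coefZ mulrA.
Qed.

Lemma polyT_sum (I : Type) (r : seq I) (P : pred I) (F : I -> {poly R}) u j :
  polyT (\sum_(i <- r | P i) F i) u j = \sum_(i <- r | P i) polyT (F i) u j.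
Proof.
by elim/big_rec2: _ => [|i a p _ <-]; rewrite ?polyT0 ?polyTD.
Qed.

Lemma polyT_sumr (p : {poly R}) (I : Type) (r : seq I) (P : pred I) (f : I -> int -> R) j :
  polyT p (fun x => \sum_(i <- r | P i) f i x) j = \sum_(i <- r | P i) polyT p (f i) j.
Proof. by rewrite /polyT exchange_big; apply: eq_bigr => i _; rewrite mulr_sumr. Qed.

Lemma polyT_shift (p : {poly R}) u t j : polyT p (fun x => u (x + t)) j = polyT p u (j + t).
Proof. by apply: eq_bigr => i _; rewrite addrAC. Qed.

Lemma polyT_XnM n (p : {poly R}) u j : polyT ('X^n * p) u j = polyT p u (j + n%:Z).
Proof.
have hs : (size ('X^n * p)%R <= n + size p)%N.
  by apply: leq_trans (size_mul_leq _ _) _; rewrite size_polyXn addSn.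
rewrite (polyT_widen u j hs) big_split_ord /= big1 ?add0r; last first.
  by move=> i _; rewrite coefXnM ltn_ord mul0r.
apply: eq_bigr => i _; rewrite coefXnM ltnNge leq_addr /=.
by rewrite addKn PoszD addrA.
Qed.

Lemma polyTM (p r : {poly R}) u j : polyT (p * r) u j = polyT p (polyT r u) j.
Proof.
rewrite -{1}(coefK p) poly_def mulr_suml polyT_sum.
by apply: eq_bigr => i _; rewrite -scalerAl polyTZ polyT_XnM.
Qed.

Lemma polyT_XnC n (a : R) u j : polyT ('X^n * a%:P) u j = a * u (j + n%:Z).
Proof. by rewrite polyT_XnM -[a%:P]mulr1 mul_polyC polyTZ polyT1. Qed.

End PolyShift.

Section MatrixPolyShift.
Variables (R : comNzRingType) (n : nat).

Definition coord_seq (m : int -> 'cV[R]_n) (b : 'I_n) : int -> R := fun x => m x b 0.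

Definition mxpolyT (Q : 'M[{poly R}]_n) (m : int -> 'cV[R]_n) : int -> 'cV[R]_n :=
  fun j => \col_a \sum_b polyT (Q a b) (coord_seq m b) j.

Lemma mxpolyTE Q m j a : mxpolyT Q m j a 0 = \sum_b polyT (Q a b) (coord_seq m b) j.
Proof. by rewrite mxE. Qed.

Lemma mxpolyT0 m j a : mxpolyT 0 m j a 0 = 0.
Proof. by rewrite mxpolyTE big1 // => b _; rewrite mxE polyT0. Qed.

Lemma mxpolyT1 m j : mxpolyT 1%:M m j = m j.
Proof.
apply/colP => a; rewrite mxE (bigD1 a) //= big1 ?addr0; first by rewrite mxE eqxx polyT1.
by move=> b /negbTE nab; rewrite mxE eq_sym nab polyT0.
Qed.

Lemma mxpolyT_sum (I : Type) (r : seq I) (P : pred I) (F : I -> 'M[{poly R}]_n) m j a :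
  mxpolyT (\sum_(i <- r | P i) F i) m j a 0 = \sum_(i <- r | P i) mxpolyT (F i) m j a 0.
Proof.
rewrite mxpolyTE; under eq_bigr do rewrite summxE polyT_sum.
by rewrite exchange_big; apply: eq_bigr => i _; rewrite mxpolyTE.
Qed.

Lemma coord_mxpolyT Q m a :
  coord_seq (mxpolyT Q m) a =1 fun x => \sum_b polyT (Q a b) (coord_seq m b) x.
Proof. by move=> x; rewrite /coord_seq mxpolyTE. Qed.

Lemma mxpolyTM Q1 Q2 m j : mxpolyT (Q1 *m Q2) m j = mxpolyT Q1 (mxpolyT Q2 m) j.
Proof.
apply/colP => a; rewrite !mxE; under eq_bigr do rewrite mxE polyT_sum.
rewrite exchange_big; apply: eq_bigr => c _.
rewrite (eq_polyT _ _ (coord_mxpolyT _ _ _)) polyT_sumr.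
by apply: eq_bigr => b _; rewrite polyTM.
Qed.

Lemma mxpolyTZ p Q m j a :
  mxpolyT (p *: Q) m j a 0 = polyT p (coord_seq (mxpolyT Q m) a) j.
Proof.
rewrite mxpolyTE (eq_polyT _ _ (coord_mxpolyT _ _ _)) polyT_sumr.
by apply: eq_bigr => b _; rewrite mxE polyTM.
Qed.

End MatrixPolyShift.

(* Both determinants are computed from the block matrix [[z, A], [B, 1]] by
   eliminating either of its off-diagonal blocks. *)
Lemma char_poly_mulmxC (T : idomainType) n r (A : 'M[T]_(n, r)) (B : 'M[T]_(r, n)) :
  (r <= n)%N -> char_poly (A *m B) = 'X^(n - r) * char_poly (B *m A).
Proof.
move=> rn; set z : {poly T} := 'X.
set Ap := map_mx polyC A; set Bp := map_mx polyC B.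
rewrite /char_poly /char_poly_mx !map_mxM -/z -/Ap -/Bp.
pose N := block_mx (@scalar_mx _ n z) Ap Bp (@scalar_mx _ r 1).
pose L1 := block_mx (@scalar_mx _ n 1) (- Ap) 0 (@scalar_mx _ r z).
pose L2 := block_mx (@scalar_mx _ n 1) 0 (- Bp) (@scalar_mx _ r z).
have detL1N : \det (L1 *m N) = z ^+ r * \det N.
  by rewrite det_mulmx det_ublock det1 det_scalar mul1r.
have detL2N : \det (L2 *m N) = z ^+ r * \det N.
  by rewrite det_mulmx det_lblock det1 det_scalar mul1r.
have eAB : \det (z%:M - Ap *m Bp) * z ^+ r = z ^+ r * \det N.
  rewrite -detL1N mulmx_block !mul1mx !mul0mx !add0r !mulmx1 mulNmx addrN.
  by rewrite mul_scalar_mx det_lblock det_scalar.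
have eBA : z ^+ n * \det (z%:M - Bp *m Ap) = z ^+ r * \det N.
  rewrite -detL2N mulmx_block !mul1mx !mul0mx !addr0 !mulmx1 mulNmx mul_scalar_mx.
  by rewrite mul_mx_scalar addNr [X in block_mx _ _ _ X]addrC mulNmx det_ublock det_scalar.
apply: (@mulfI _ (z ^+ r)); first by rewrite expf_neq0 ?polyX_eq0.
by rewrite mulrC eAB -eBA mulrA -exprD subnKC.
Qed.

Lemma coef_char_poly_mul_rank (F : fieldType) n (A : 'M[{poly F}]_n) (B : 'M[F]_n) l :
  (l < n - \rank B)%N -> (char_poly (A *m map_mx polyC B))`_l = 0.
Proof.
move=> hl; rewrite -(mulmx_base B) map_mxM mulmxA char_poly_mulmxC ?rank_leq_col //.
by rewrite coefXnM hl.
Qed.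

Lemma mxrank_sum_le (F : fieldType) m n (I : Type) (r : seq I) (P : pred I)
    (A : I -> 'M[F]_(m, n)) :
  (\rank (\sum_(i <- r | P i) A i)%R <= \sum_(i <- r | P i) \rank (A i))%N.
Proof.
elim/big_ind2: _ => [|B b C c hB hC|//]; first by rewrite mxrank0.
exact: leq_trans (mxrank_add _ _) (leq_add hB hC).
Qed.

Lemma horner_mx_coef (T : comNzRingType) n (A : 'M[T]_n.+1) (p : {poly T}) :
  horner_mx A p = \sum_(i < size p) p`_i *: A ^+ i.
Proof.
rewrite -{1}(coefK p) poly_def linear_sum; apply: eq_bigr => i _.
by rewrite linearZ /= rmorphXn /= horner_mx_X.
Qed.

Section CharacteristicRecurrence.
Variables (R : realType) (q' : nat).
Local Notation q := q'.+1.
Variables (hq : (1 < q)%N) (c : 'I_q -> int) (M : 'M[R]_q) (s eps : 'I_q -> R).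
Local Notation i0 := (i0 hq).
Local Notation K := (Kmx hq s eps).
Local Notation N := (Nmax c).
Local Notation S := (snum hq s).
Local Notation P := (Ptil hq c M s eps).
Local Notation step := (lbm_step hq c M s eps).
Local Notation iterl := (lbm_iter hq c M s eps).
Local Notation gam := (gammaT hq c M s eps).

Lemma KmxE a b : K a b = (a == b)%:R + s a * (eps a * (b == i0)%:R - (a == b)%:R).
Proof. by rewrite /Kmx mxE mul_diag_mx !mxE big_ord1 !mxE eqxx andbT. Qed.

Lemma Kmx_col_eq0 b : b != i0 -> s b = 1 -> col b K = 0.
Proof.
move=> /negbTE nb sb; apply/colP => a; rewrite mxE [RHS]mxE KmxE nb mulr0 add0r.
by case: eqP => [->|_]; rewrite ?sb ?mulr0 ?mul1r ?subrr /=; ring.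
Qed.

Lemma snum_lt : (S < q)%N.
Proof.
have := max_card (mem (i0 |: [set i : 'I_q | (i != i0) && (s i != 1)])).
by rewrite cardsU1 inE eqxx card_ord.
Qed.

Lemma rank_Kmx : (\rank K <= S.+1)%N.
Proof.
pose J b := (b == i0) || (s b != 1).
have -> : K = \sum_(b | J b) col b K *m delta_mx 0 b.
  rewrite -{1}[K]mulmx1 mx1_sum_delta mulmx_sumr (bigID J) /= [X in _ + X]big1 ?addr0.
    by apply: eq_bigr => b _; rewrite -(mul_delta_mx (0 : 'I_1)) mulmxA -colE.
  move=> b; rewrite negb_or negbK => /andP[nb /eqP sb].
  by rewrite -(mul_delta_mx (0 : 'I_1)) mulmxA -colE Kmx_col_eq0 ?mul0mx.
apply: leq_trans (mxrank_sum_le _ _ _) _.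
apply: (@leq_trans (\sum_(b | J b) 1)%N).
  by apply: leq_sum => b _; apply: mulmx_max_rank.
rewrite (bigD1 i0) /J ?eqxx //= add1n ltnS sum1dep_card /snum.
apply: subset_leq_card; apply/fintype.subsetP => b; rewrite !inE andbC.
by case: (b == i0).
Qed.

Lemma Ptil_mulmxK : exists G, P = G *m map_mx polyC K.
Proof.
exists (\sum_(k < (N + N).+1) 'X^k *: map_mx polyC
  (\sum_(i < q | c i == - (k%:Z - N%:Z)) M *m delta_mx i i *m invmx M)).
rewrite /Ptil mulmx_suml; apply: eq_bigr => k _.
by rewrite /Emx -mulmx_suml map_mxM scalemxAl.
Qed.

Lemma acoef_eq0 l : (l < q - S.+1)%N -> acoef hq c M s eps l = 0.
Proof.
move=> hl; have [G PG] := Ptil_mulmxK; rewrite /acoef PG coef_char_poly_mul_rank //.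
by apply: leq_trans hl _; rewrite leq_sub2l // rank_Kmx.
Qed.

Lemma acoef_q : acoef hq c M s eps q = 1.
Proof.
have := char_poly_monic P.
by rewrite monicE /lead_coef size_char_poly => /eqP.
Qed.

Lemma gammaTE l u j : gam l u j = polyT (acoef hq c M s eps l) u (j - (N * (q - l))%N%:Z).
Proof. by apply: eq_bigr => i _; rewrite addrCA addrC. Qed.

Lemma gammaT_q u j : gam q u j = u j.
Proof. by rewrite gammaTE acoef_q polyT1 subnn muln0 subr0. Qed.

Lemma lbm_step_shift m t j : step (fun x => m (x + t)) j = step m (j + t).
Proof. by apply: eq_bigr => k _; rewrite addrAC. Qed.

Lemma mxpolyT_Ptil m j : mxpolyT P m j = step m (j + N%:Z).
Proof.
apply/colP => a; rewrite mxpolyTE /lbm_step summxE.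
under eq_bigr do rewrite summxE polyT_sum.
rewrite exchange_big; apply: eq_bigr => k _; rewrite mxE; apply: eq_bigr => b _.
by rewrite !mxE polyT_XnC /coord_seq; congr (_ * m _ b 0); lia.
Qed.

Lemma mxpolyT_Ptil_exp l m j : mxpolyT (P ^+ l) m j = iterl l m (j + (N * l)%N%:Z).
Proof.
elim: l j => [|l IH] j; first by rewrite expr0 mxpolyT1 muln0 addr0.
rewrite exprS -mulmxE mxpolyTM mxpolyT_Ptil.
rewrite (_ : mxpolyT _ m = fun x => iterl l m (x + (N * l)%N%:Z)); last exact/funext/IH.
by rewrite lbm_step_shift /lbm_iter iterS; congr (step _ _); lia.
Qed.

Lemma lbm_char_recurrence m a j :
  \sum_(i < q.+1) gam i (coord_seq (iterl i m) a) j = 0.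
Proof.
have := congr1 (fun Q => mxpolyT Q m (j - (N * q)%N%:Z) a 0) (Cayley_Hamilton P).
rewrite /= mxpolyT0 horner_mx_coef mxpolyT_sum size_char_poly => CH; rewrite -[RHS]CH.
apply: eq_bigr => i _; rewrite mxpolyTZ gammaTE.
have shiftE : coord_seq (mxpolyT (P ^+ i) m) a =1
    fun x => coord_seq (iterl i m) a (x + (N * i)%N%:Z).
  by move=> x; rewrite /coord_seq mxpolyT_Ptil_exp.
rewrite (eq_polyT _ _ shiftE) polyT_shift; congr polyT.
by have := ltn_ord i; rewrite ltnS mulnBr; nia.
Qed.

Lemma lbm_fd_recurrence m a j :
  coord_seq (iterl q m) a j =
  - \sum_(l < S.+1) gam (q - l - 1) (coord_seq (iterl (q - l - 1) m) a) j.
Proof.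
have := lbm_char_recurrence m a j; rewrite big_ord_recr /= gammaT_q => /eqP.
rewrite addrC addr_eq0 => /eqP ->; congr (- _).
rewrite (reindex_inj rev_ord_inj) /= (big_ord_widen q
  (fun l => gam (q - l - 1) (coord_seq (iterl (q - l - 1) m) a) j) snum_lt).
rewrite (bigID (fun i : 'I_q => (i < S.+1)%N)) /= [X in _ + X = _]big1 ?addr0.
  by apply: eq_bigr => i _; rewrite subnS subn1.
move=> i hi; rewrite gammaTE acoef_eq0 ?polyT0 //.
by have := ltn_ord i; move: hi; rewrite -leqNgt; lia.
Qed.

End CharacteristicRecurrence.

Lemma sqr_sum_le (R : realFieldType) n (x : 'I_n -> R) :
  (\sum_(k < n) x k) ^+ 2 <= n%:R * \sum_(k < n) x k ^+ 2.
Proof.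
set S := \sum_(k < n) x k; set Q := \sum_(k < n) x k ^+ 2.
have inner k : \sum_(l < n) (x k - x l) ^+ 2 = n%:R * x k ^+ 2 - (x k * S) *+ 2 + Q.
  under eq_bigr do rewrite sqrrB.
  rewrite big_split /= big_split /= sumrN sumr_const card_ord mulr_natl.
  by rewrite sumrMnl -mulr_sumr.
have : 0 <= \sum_(k < n) \sum_(l < n) (x k - x l) ^+ 2.
  by apply: sumr_ge0 => k _; apply: sumr_ge0 => l _; apply: sqr_ge0.
under eq_bigr do rewrite inner.
rewrite big_split /= big_split /= sumrN sumr_const card_ord -mulr_sumr.
rewrite sumrMnl -mulr_suml mulr_natl -/Q -/S.
by move: (Q *+ n) => y; rewrite expr2 mulr2n; lra.
Qed.

Section EsumTheory.
Variable R : realType.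
Local Open Scope ereal_scope.

Lemma ge0_esumZl (T : choiceType) (S : set T) (r : R) (a : T -> \bar R) :
  (0 <= r)%R -> (forall i, 0 <= a i) ->
  \esum_(i in S) (r%:E * a i) = r%:E * \esum_(i in S) a i.
Proof.
move=> r0 a0; rewrite /esum -ereal_supZl //; last first.
  by apply/set0P; exists 0; exists set0; [exact: fsets_set0 | rewrite fsbig_set0].
congr ereal_sup; apply/seteqP; split => x /=.
  move=> [A hA <-]; exists (\sum_(i \in A) a i); first by exists A.
  by rewrite ge0_mule_fsumr.
by move=> [y [A hA <-] <-]; exists A => //; rewrite ge0_mule_fsumr.
Qed.

Lemma esum_shift (V : zmodType) (a : V -> \bar R) (t : V) :
  \esum_(j in [set: V]) a (j + t)%R = \esum_(j in [set: V]) a j.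
Proof.
rewrite [RHS](reindex_esum [set: V] [set: V] (fun j => (j + t)%R)) //.
split=> [//|x y _ _ /addIr //|y _]; by exists (y - t)%R; rewrite ?subrK.
Qed.

End EsumTheory.

Section Energy.
Variables (R : realType) (q : nat).

Definition energy (dx : R) (m : int -> 'cV[R]_q) : \bar R :=
  (\esum_(j in [set: int]) (dx * nrm2 (m j))%:E)%E.

Lemma nrm2_ge0 (v : 'cV[R]_q) : 0 <= nrm2 v.
Proof. by apply: sumr_ge0 => i _; apply: sqr_ge0. Qed.

Lemma nrm2_sum n (v : 'I_n -> 'cV[R]_q) :
  nrm2 (\sum_(k < n) v k) <= n%:R * \sum_(k < n) nrm2 (v k).
Proof.
rewrite /nrm2 exchange_big mulr_sumr; apply: ler_sum => a _.
by rewrite summxE; apply: sqr_sum_le.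
Qed.

Definition mx_bound (A : 'M[R]_q) : R := (q * q)%:R * \sum_a \sum_b A a b ^+ 2.

Lemma mx_bound_ge0 A : 0 <= mx_bound A.
Proof. by apply: mulr_ge0 => //; do 2!apply: sumr_ge0 => ? _; apply: sqr_ge0. Qed.

Lemma nrm2_mulmx (A : 'M[R]_q) v : nrm2 (A *m v) <= mx_bound A * nrm2 v.
Proof.
set mu := \sum_a \sum_b A a b ^+ 2.
have A_le a b : A a b ^+ 2 <= mu.
  apply: le_trans (_ : _ <= \sum_b A a b ^+ 2) _.
    by rewrite (bigD1 b) //= lerDl sumr_ge0 // => ? _; apply: sqr_ge0.
  rewrite /mu [X in _ <= X](bigD1 a) //= lerDl; do 2!apply: sumr_ge0 => ? _; apply: sqr_ge0.
rewrite /mx_bound natrM -!mulrA -/mu.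
have -> : q%:R * (q%:R * (mu * nrm2 v)) = \sum_(a < q) q%:R * (mu * nrm2 v).
  by rewrite sumr_const card_ord mulr_natl.
rewrite {1}/nrm2; apply: ler_sum => a _; rewrite mxE.
apply: le_trans (sqr_sum_le (fun b => A a b * v b 0)) _.
rewrite ler_wpM2l // /nrm2 mulr_sumr; apply: ler_sum => b _.
by rewrite exprMn ler_wpM2r ?sqr_ge0 ?A_le.
Qed.

Local Open Scope ereal_scope.

Lemma energy_ge0 dx m : (0 <= dx)%R -> 0 <= energy dx m.
Proof.
by move=> dx0; apply: esum_ge0 => j _; rewrite lee_fin mulr_ge0 ?nrm2_ge0.
Qed.

Lemma energy_coordE dx m : (0 <= dx)%R ->
  energy dx m = \sum_(b < q) \esum_(j in [set: int]) (dx * (m j b 0) ^+ 2)%:E.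
Proof.
move=> dx0; rewrite /energy -esum_sum; last first.
  by move=> j b _ _; rewrite lee_fin mulr_ge0 ?sqr_ge0.
by apply: eq_esum => j _; rewrite sumEFin /nrm2 mulr_sumr.
Qed.

Lemma coord_energy_le dx m b : (0 <= dx)%R ->
  \esum_(j in [set: int]) (dx * coord_seq m b j ^+ 2)%:E <= energy dx m.
Proof.
move=> dx0; rewrite (energy_coordE m dx0) (bigD1 b) //= leeDl //.
by apply: sume_ge0 => b' _; apply: esum_ge0 => j _; rewrite lee_fin mulr_ge0 ?sqr_ge0.
Qed.

End Energy.

Section LBMEnergy.
Variables (R : realType) (q : nat) (hq : (1 < q)%N).
Variables (c : 'I_q -> int) (M : 'M[R]_q) (s eps : 'I_q -> R).
Local Notation N := (Nmax c).
Local Notation E := (Emx hq c M s eps).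
Local Notation step := (lbm_step hq c M s eps).
Local Notation iterl := (lbm_iter hq c M s eps).

Definition lbm_step_bound : R :=
  ((N + N).+1)%:R * \sum_(k < (N + N).+1) mx_bound (E (k%:Z - N%:Z)).

Definition lbm_growth : R := lbm_step_bound * ((N + N).+1)%:R.

Lemma lbm_step_bound_ge0 : 0 <= lbm_step_bound.
Proof. by apply: mulr_ge0 => //; apply: sumr_ge0 => k _; apply: mx_bound_ge0. Qed.

Lemma lbm_growth_ge0 : 0 <= lbm_growth.
Proof. by apply: mulr_ge0 => //; apply: lbm_step_bound_ge0. Qed.

Lemma nrm2_lbm_step m j : nrm2 (step m j) <=
  lbm_step_bound * \sum_(k < (N + N).+1) nrm2 (m (j + (k%:Z - N%:Z))).
Proof.
apply: le_trans (nrm2_sum _) _.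
rewrite /lbm_step_bound -mulrA ler_wpM2l // mulr_sumr; apply: ler_sum => k _.
apply: le_trans (nrm2_mulmx _ _) _; rewrite ler_wpM2r ?nrm2_ge0 //.
by rewrite (bigD1 k) //= lerDl sumr_ge0 // => ? _; apply: mx_bound_ge0.
Qed.

Local Open Scope ereal_scope.

Lemma energy_lbm_step dx m : (0 <= dx)%R -> energy dx (step m) <= lbm_growth%:E * energy dx m.
Proof.
move=> dx0; have B0 := lbm_step_bound_ge0.
apply: (@le_trans _ _ (\esum_(j in [set: int]) (lbm_step_bound%:E *
    \sum_(k < (N + N).+1) (dx * nrm2 (m (j + (k%:Z - N%:Z)%R)))%:E))).
  apply: le_esum => j _; rewrite sumEFin -EFinM lee_fin -mulr_sumr mulrCA.
  by rewrite ler_wpM2l // nrm2_lbm_step.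
have term_ge0 j k : 0 <= (dx * nrm2 (m (j + k)%R))%:E by rewrite lee_fin mulr_ge0 ?nrm2_ge0.
rewrite ge0_esumZl //; last by move=> j; apply: sume_ge0 => k _.
rewrite esum_sum; last by move=> j k _ _.
under eq_bigr do rewrite (esum_shift (fun j => (dx * nrm2 (m j))%:E)).
by rewrite sumr_const card_ord -[X in _ * X <= _]mule_natl muleA -EFinM.
Qed.

Lemma energy_lbm_iter dx m l : (0 <= dx)%R ->
  energy dx (iterl l m) <= (lbm_growth ^+ l)%:E * energy dx m.
Proof.
move=> dx0; elim: l => [|l IH]; first by rewrite expr0 mul1e.
rewrite /lbm_iter iterS; apply: le_trans (energy_lbm_step _ dx0) _.
by rewrite exprS (EFinM lbm_growth) -muleA; apply: lee_wpmul2l; rewrite ?lee_fin ?lbm_growth_ge0.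
Qed.

Lemma energy_lbm_iter_le dx m l n : (0 <= dx)%R -> (l <= n)%N ->
  energy dx (iterl l m) <= ((1 + lbm_growth) ^+ n)%:E * energy dx m.
Proof.
move=> dx0 ln; apply: le_trans (energy_lbm_iter _ _ dx0) _.
apply: lee_wpmul2r; first exact: energy_ge0.
rewrite lee_fin; have G0 := lbm_growth_ge0.
apply: le_trans (_ : _ <= (1 + lbm_growth) ^+ l)%R _.
  by rewrite lerXn2r ?nnegrE //; lra.
by rewrite ler_weXn2l //; lra.
Qed.

End LBMEnergy.

Section FDStableLBMStable.
Variables (R : realType) (q' : nat).
Local Notation q := q'.+1.
Variables (hq : (1 < q)%N) (c : 'I_q -> int) (M : 'M[R]_q) (s eps : 'I_q -> R).
Local Notation S := (snum hq s).
Local Notation iterl := (lbm_iter hq c M s eps).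
Local Notation G := ((1 + lbm_growth hq c M s eps) ^+ q).

Lemma lbm_coord_fd_solution m0 b :
  fd_solution hq c M s eps (fun k => coord_seq (iterl (k + (q - S.+1)) m0) b).
Proof.
move=> k hk j; have hS := snum_lt hq s.
have iterlD l n : iterl (l + n) m0 = iterl l (iterl n m0) by rewrite /lbm_iter iterD.
rewrite (_ : (k.+1 + _)%N = q + (k - S))%N ?iterlD ?lbm_fd_recurrence; last lia.
congr (- _); apply: eq_bigr => l _; rewrite -iterlD.
by congr (gammaT _ _ _ _ _ _ (coord_seq (iterl _ m0) b) j); have := ltn_ord l; lia.
Qed.

Local Open Scope ereal_scope.

Lemma lbm_coord_l2 m0 b l : l2_vec m0 -> l2_sc (coord_seq (iterl l m0) b).
Proof.
move=> m0_l2; apply: (@le_lt_trans _ _ (energy 1 (iterl l m0))).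
  by apply: le_trans (coord_energy_le _ _ ler01); apply: le_esum => j _; rewrite mul1r.
apply: le_lt_trans (energy_lbm_iter hq c M s eps m0 l ler01) _.
apply: lte_mul_pinfty; rewrite ?lee_fin ?exprn_ge0 ?lbm_growth_ge0 //.
by rewrite /energy; under eq_esum do rewrite mul1r.
Qed.

Lemma fd_stable_coord_bound : fd_L2_stable hq c M s eps ->
  exists2 C : R, (0 <= C)%R & forall dx m0 b n, (0 < dx)%R -> l2_vec m0 ->
    (q - S.+1 <= n)%N ->
    \esum_(j in [set: int]) (dx * coord_seq (iterl n m0) b j ^+ 2)%:E <= C%:E * energy dx m0.
Proof.
move=> [C [C0 HC]]; have G0 : (0 <= G)%R by rewrite exprn_ge0 // addr_ge0 ?lbm_growth_ge0.
exists (C * S.+1%:R * G)%R; first by rewrite !mulr_ge0 // ltW.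
move=> dx m0 b n dx0 m0_l2 hn; have dx0' := ltW dx0.
have := HC dx dx0 _ (fun l _ => lbm_coord_l2 b _ m0_l2) (lbm_coord_fd_solution m0 b).
move=> /(_ (n - (q - S.+1))%N); rewrite subnK // => /le_trans; apply.
apply: le_trans (_ : _ <= C%:E * \sum_(l < S.+1) (G%:E * energy dx m0)) _.
  apply: lee_wpmul2l; first by rewrite lee_fin ltW.
  apply: lee_sum => l _.
  apply: le_trans (coord_energy_le _ _ dx0') _.
  by apply: energy_lbm_iter_le => //; have := ltn_ord l; have := snum_lt hq s; lia.
by rewrite sumr_const card_ord -[X in C%:E * X]mule_natl !muleA -!EFinM.
Qed.

Lemma fd_stable_lbm_stable : fd_L2_stable hq c M s eps -> lbm_L2_stable hq c M s eps.
Proof.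
move=> /fd_stable_coord_bound [C C0 HC].
have G1 : (1 <= G)%R by rewrite exprn_ege1 // lerDl lbm_growth_ge0.
exists (G + q%:R * C)%R; split; first by rewrite ltr_wpDr ?mulr_ge0 // (lt_le_trans ltr01).
move=> dx dx0 m0 m0_l2 n; have dx0' := ltW dx0.
change (energy dx (iterl n m0) <= (G + q%:R * C)%:E * energy dx m0).
have E0 := energy_ge0 m0 dx0'.
case: (ltnP n (q - S.+1)) => hn.
  apply: le_trans (energy_lbm_iter_le hq c M s eps m0 dx0' (_ : n <= q)%N) _; first lia.
  by apply: lee_wpmul2r => //; rewrite lee_fin lerDl mulr_ge0.
rewrite energy_coordE //.
apply: le_trans (_ : _ <= \sum_(b < q) (C%:E * energy dx m0)) _.
  by apply: lee_sum => b _; apply: HC.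
rewrite sumr_const card_ord -[X in X <= _]mule_natl muleA -EFinM.
by apply: lee_wpmul2r => //; rewrite lee_fin lerDr; lra.
Qed.

End FDStableLBMStable.

Lemma esum_supported1 (R : realType) (T : choiceType) (f : T -> R) (t : T) :
  (forall j, j != t -> f j = 0) -> (forall j, 0 <= f j) ->
  (\esum_(j in [set: T]) (f j)%:E = (f t)%:E)%E.
Proof.
move=> f0 f_ge0; rewrite (esumID [set t]); last by move=> i _; rewrite lee_fin.
rewrite [X in (_ + X)%E]esum1 ?adde0; last by move=> i [_ /eqP ni]; rewrite f0.
by rewrite setTI esum_set1 // lee_fin.
Qed.

Section Counterexample.
Variable R : realType.

Definition ex_q_gt1 : (1 < 3)%N := erefl.
Definition ex_c : 'I_3 -> int := fun _ => 0.
Definition ex_M : 'M[R]_3 := 1%:M.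
Definition ex_s : 'I_3 -> R := fun _ => 2.
Definition ex_eps : 'I_3 -> R := fun i => (i == i0 ex_q_gt1)%:R.
Definition ex_d : 'rV[R]_3 := \row_i (if i == i0 ex_q_gt1 then 1 else -1).

Local Notation step := (lbm_step ex_q_gt1 ex_c ex_M ex_s ex_eps).
Local Notation gam := (gammaT ex_q_gt1 ex_c ex_M ex_s ex_eps).

Lemma ex_hyps : lbm_hyps ex_q_gt1 ex_M ex_s ex_eps.
Proof. by split=> [|i _|]; rewrite ?unitmx1 /ex_eps ?eqxx //; apply/andP; split=> //; lra. Qed.

Lemma ex_Kmx : Kmx ex_q_gt1 ex_s ex_eps = diag_mx ex_d.
Proof.
apply/matrixP => a b; rewrite KmxE !mxE /ex_s /ex_eps.
case: (a =P b) => [<-|nab]; first by case: (a == _); rewrite /= ?eqxx; lra.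
case: (a =P i0 _) => [ea|na]; last by rewrite /= mul0r; lra.
have -> : (b == i0 ex_q_gt1) = false by apply/eqP => eb; apply: nab; rewrite ea eb.
by rewrite /=; lra.
Qed.

Lemma ex_Nmax : Nmax ex_c = 0%N.
Proof. by rewrite /Nmax big1. Qed.

Lemma ex_Emx : Emx ex_q_gt1 ex_c ex_M ex_s ex_eps 0 = diag_mx ex_d.
Proof.
rewrite /Emx -ex_Kmx /ex_M invmx1 -mulmx_suml.
rewrite (eq_bigl xpredT) => [|i]; last by rewrite /ex_c oppr0 eqxx.
under eq_bigr do rewrite mul1mx mulmx1.
by rewrite -mx1_sum_delta mul1mx.
Qed.

Lemma ex_lbm_step m j : step m j = diag_mx ex_d *m m j.
Proof. by rewrite /lbm_step ex_Nmax big_ord1 subrr addr0 ex_Emx. Qed.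

Lemma nrm2_ex_d v : nrm2 (diag_mx ex_d *m v) = nrm2 v.
Proof.
apply: eq_bigr => i _; rewrite mul_diag_mx !mxE.
by case: (i == _); rewrite ?mul1r ?mulN1r ?sqrrN.
Qed.

Lemma ex_lbm_stable : lbm_L2_stable ex_q_gt1 ex_c ex_M ex_s ex_eps.
Proof.
have nrm2_iter n m j : nrm2 (lbm_iter ex_q_gt1 ex_c ex_M ex_s ex_eps n m j) = nrm2 (m j).
  by elim: n m j => [//|n IH] m j; rewrite /lbm_iter iterS ex_lbm_step nrm2_ex_d IH.
exists 1; split=> // dx dx0 m0 _ n.
by rewrite mul1e; under eq_esum do rewrite nrm2_iter.
Qed.

Lemma ex_snum : snum ex_q_gt1 ex_s = 2%N.
Proof.
rewrite /snum (_ : [set i | _] = [set~ i0 ex_q_gt1]) ?cardsC1 ?card_ord //.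
by apply/setP => i; rewrite !inE /ex_s pnatr_eq1 andbT.
Qed.

Definition ex_char_poly : {poly R} := 'X^3 + 'X^2 - 'X - 1.

Lemma ex_acoef l : acoef ex_q_gt1 ex_c ex_M ex_s ex_eps l = (ex_char_poly`_l)%:P.
Proof.
rewrite /acoef.
have -> : Ptil ex_q_gt1 ex_c ex_M ex_s ex_eps = map_mx polyC (diag_mx ex_d).
  by rewrite /Ptil ex_Nmax big_ord1 expr0 scale1r subrr ex_Emx.
rewrite -map_char_poly coef_map (_ : char_poly (diag_mx ex_d) = ex_char_poly) //.
rewrite char_poly_trig ?diag_mx_is_trig // !big_ord_recr big_ord0 /= !mxE /=.
by rewrite polyCN polyC1 /ex_char_poly; ring.
Qed.

Lemma ex_gammaT l u j : gam l u j = ex_char_poly`_l * u j.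
Proof.
rewrite gammaTE ex_acoef ex_Nmax mul0n subr0 /polyT size_polyC.
case: eqP => [->|_]; first by rewrite big_ord0 mul0r.
by rewrite big_ord1 coefC addr0.
Qed.

Definition ex_fd_sol (n : nat) (j : int) : R := if j == 0 then (-1) ^+ n * n%:R else 0.

Lemma ex_fd_solution : fd_solution ex_q_gt1 ex_c ex_M ex_s ex_eps ex_fd_sol.
Proof.
rewrite /fd_solution ex_snum => n hn j.
rewrite !big_ord_recr big_ord0 /= !ex_gammaT /ex_char_poly.
rewrite !(coefD, coefB, coefXn, coefX, coef1, coefN) /= /ex_fd_sol.
case: (j == 0); last by rewrite !mulr0; ring.
case: n hn => [|[|k]] // _; rewrite !subSS !subn0 !exprS !mulrS; ring.
Qed.

Lemma esum_ex_fd_sol n :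
  (\esum_(j in [set: int]) (1 * ex_fd_sol n j ^+ 2)%:E = (n%:R ^+ 2)%:E)%E.
Proof.
have solE j : ex_fd_sol n j ^+ 2 = if j == 0 then n%:R ^+ 2 else 0.
  rewrite /ex_fd_sol; case: (j == 0); last by rewrite expr0n.
  by rewrite exprMn exprAC sqrrN !expr1n mul1r.
rewrite (esum_supported1 (f := fun j => 1 * ex_fd_sol n j ^+ 2) (t := 0)).
- by rewrite mul1r solE eqxx.
- by move=> j nj; rewrite solE (negbTE nj) mulr0.
- by move=> j; rewrite mul1r sqr_ge0.
Qed.

Lemma ex_fd_unstable : ~ fd_L2_stable ex_q_gt1 ex_c ex_M ex_s ex_eps.
Proof.
move=> [C [C0 HC]].
have sol_l2 l : (l <= snum ex_q_gt1 ex_s)%N -> l2_sc (ex_fd_sol l).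
  move=> _; rewrite /l2_sc.
  under eq_esum do rewrite -[_ ^+ 2]mul1r.
  by rewrite esum_ex_fd_sol ltry.
pose n := Num.Def.archi_bound (5 * C).
have hn : 5 * C < n%:R by apply: archi_boundP; lra.
have := HC 1 ltr01 _ sol_l2 ex_fd_solution n.
rewrite esum_ex_fd_sol ex_snum !big_ord_recr big_ord0 /= !esum_ex_fd_sol.
rewrite !add0e -!EFinD -EFinM lee_fin.
have n1 : 1 <= (n%:R : R) by rewrite ler1n -(ltr0n R); lra.
have : (n%:R : R) <= n%:R ^+ 2 by rewrite expr2 ler_peMl //; lra.
lra.
Qed.

End Counterexample.

Theorem mainTheorem1 (R : realType) :
  (forall (q : nat) (hq : (1 < q)%N) (c : 'I_q -> int) (M : 'M[R]_q)
          (s eps : 'I_q -> R),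
      lbm_hyps hq M s eps ->
      fd_L2_stable hq c M s eps -> lbm_L2_stable hq c M s eps)
  /\
  (exists (q : nat) (hq : (1 < q)%N) (c : 'I_q -> int) (M : 'M[R]_q)
          (s eps : 'I_q -> R),
      [/\ lbm_hyps hq M s eps, lbm_L2_stable hq c M s eps &
          ~ fd_L2_stable hq c M s eps]).
Proof.
split.
  by case=> [|q'] hq c M s eps _ //; apply: fd_stable_lbm_stable.
exists 3%N, ex_q_gt1, ex_c, (ex_M R), (ex_s R), (ex_eps R).
by split; [apply: ex_hyps | apply: ex_lbm_stable | apply: ex_fd_unstable].
Qed.
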